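(* Let $\Gamma=(G,\sigma)$, $G=(V,E)$, be a signed graph and $f:V\to\mathbb R$ a function not identically zero. Then for any three pairwise distinct weak nodal domains $D_1,D_2,D_3$ of $f$, $D_1\cap D_2\cap D_3=\emptyset$ (as vertex sets).
   Context: A signed graph is a finite simple undirected graph $G=(V,E)$ with $\sigma:E\to\{+1,-1\}$. A walk is $y_1,\dots,y_m$ ($m\ge2$) with consecutive vertices adjacent. For $f:V\to\mathbb R$, a W-walk of $f$ is a walk such that for any two consecutive nonzeros $y_i,y_j$ along it ($i<j$, $f(y_i)\ne0\ne f(y_j)$, $f(y_l)=0$ for $i<l<j$) one has $f(y_i)\sigma_{y_iy_{i+1}}\cdots\sigma_{y_{j-1}y_j}f(y_j)>0$. On $\Omega=\{x:f(x)\ne0\}$ the relation ''$x=y$ or a W-walk connects $x$ and $y$'' is an equivalence relation with classes $W_1,\dots,W_q$; the weak nodal domains of $f$ are the induced subgraphs on $W_i^0=W_i\cup\{x\in V:\text{there is a W-walk from } x \text{ to some vertex of } W_i\}$. *)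

From HB Require Import structures.
From mathcomp Require Import all_boot all_order all_algebra.
From mathcomp Require Export reals.
Set Implicit Arguments. Unset Strict Implicit. Unset Printing Implicit Defensive.
Import Order.TTheory GRing.Theory Num.Theory.
Local Open Scope ring_scope.

Section SignedGraph.
Variables (T : finType) (R : realType).

Definition signed_graph (e : rel T) (sigma : T -> T -> R) : Prop :=
  symmetric e /\ irreflexive e /\
  (forall x y, e x y -> sigma x y = sigma y x /\ (sigma x y = 1 \/ sigma x y = -1)).

Variables (e : rel T) (sigma : T -> T -> R) (f : T -> R).

Definition is_walk (s : seq T) : Prop :=
  (2 <= size s)%N /\
  forall (x0 : T) i, (i.+1 < size s)%N -> e (nth x0 s i) (nth x0 s i.+1).

Definition is_W_walk (s : seq T) : Prop :=
  is_walk s /\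
  forall (x0 : T) i j, (i < j)%N -> (j < size s)%N ->
    f (nth x0 s i) != 0 -> f (nth x0 s j) != 0 ->
    (forall l, (i < l)%N -> (l < j)%N -> f (nth x0 s l) = 0) ->
    0 < f (nth x0 s i) * (\prod_(i <= l < j) sigma (nth x0 s l) (nth x0 s l.+1))
          * f (nth x0 s j).

Definition W_walk_from_to (x y : T) : Prop :=
  exists s, is_W_walk s /\ head x s = x /\ last x s = y /\ s <> [::].

Definition W_rel (x y : T) : Prop :=
  x = y \/ W_walk_from_to x y \/ W_walk_from_to y x.

Definition W_class (x : T) (y : T) : Prop := f y != 0 /\ W_rel x y.

Definition W_class0 (x : T) (z : T) : Prop :=
  W_class x z \/ exists w, W_class x w /\ W_walk_from_to z w.

Definition weak_nodal_domain (D : {set T}) : Prop :=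
  exists x, f x != 0 /\ forall z, z \in D <-> W_class0 x z.

End SignedGraph.

(* Multiply the value of f at the i-th vertex y_i of a walk by the sign product
   sigma(y_0 y_1) ... sigma(y_(i-1) y_i) ([switched]).  Sign products multiply
   along the walk and square to 1, so positivity of f(y_i) sigma(y_i..y_j) f(y_j)
   for consecutive nonzeros propagates to all pairs of nonzeros: a walk is a
   W-walk iff all its nonzero switched values share one sign c
   ([sign_consistent]).  In these terms W-walks reverse, concatenate at a
   nonzero vertex, and two W-walks leaving the same vertex with the same sign
   glue (one reversed) into a W-walk between their endpoints.  So the W-relation
   is an equivalence on {f <> 0} and a weak nodal domain is determined by any
   nonzero vertex of it.  A vertex common to three distinct domains is
   therefore a zero of f reaching each domain by a W-walk with a nonzero sign;
   two of the three signs agree, and gluing the two walks identifies the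
   corresponding domains. *)

From HB Require Import structures.
From mathcomp Require Import all_boot all_order all_algebra.
From mathcomp Require Import reals ring lra zify.
Import Order.TTheory GRing.Theory Num.Theory.
Set Implicit Arguments. Unset Strict Implicit. Unset Printing Implicit Defensive.
Local Open Scope ring_scope.

Section Signs.
Variable R : realDomainType.
Implicit Types a b c : R.

Lemma mul_gt0_trans a b c : 0 < a * b -> 0 < b * c -> 0 < a * c.
Proof. by move=> hab hbc; nra. Qed.

Lemma sign_pigeonhole a b c : a != 0 -> b != 0 -> c != 0 ->
  [\/ 0 < a * b, 0 < a * c | 0 < b * c].
Proof.
rewrite !neq_lt => /orP[] ha /orP[] hb /orP[] hc;
  by [constructor 1; nra | constructor 2; nra | constructor 3; nra].
Qed.

End Signs.

Lemma nth_cat_rcons (T : Type) (x0 y : T) (p t : seq T) i : (i <= size p)%N ->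
  nth x0 (p ++ y :: t) i = nth x0 (rcons p y) i.
Proof. by move=> hi; rewrite -cat_rcons nth_cat size_rcons ltnS hi. Qed.

Lemma nth_cat_shift (T : Type) (x0 : T) (p s : seq T) i : nth x0 (p ++ s) (size p + i) = nth x0 s i.
Proof. by rewrite nth_cat ltnNge leq_addr addKn. Qed.

Section Walks.
Variables (T : finType) (R : realType) (e : rel T) (sigma : T -> T -> R) (f : T -> R).
Hypothesis sg : signed_graph e sigma.

Local Notation is_W_walk := (is_W_walk e sigma f).
Local Notation W_walk_from_to := (W_walk_from_to e sigma f).

Definition walk_sign (x0 : T) (s : seq T) (i j : nat) : R :=
  \prod_(i <= l < j) sigma (nth x0 s l) (nth x0 s l.+1).

Definition switched (x0 : T) (s : seq T) (i : nat) : R :=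
  f (nth x0 s i) * walk_sign x0 s 0 i.

Definition sign_consistent (x0 : T) (c : R) (s : seq T) : Prop :=
  forall i, (i < size s)%N -> f (nth x0 s i) != 0 -> 0 < c * switched x0 s i.

Lemma walk_sign0 x0 s i : walk_sign x0 s i i = 1.
Proof. by rewrite /walk_sign big_geq. Qed.

Lemma walk_sign_cat x0 s i j k : (i <= j <= k)%N ->
  walk_sign x0 s i k = walk_sign x0 s i j * walk_sign x0 s j k.
Proof. by case/andP=> hij hjk; rewrite /walk_sign (big_cat_nat hij hjk). Qed.

Lemma walk_sign_sqr x0 s i j : is_walk e s -> (j < size s)%N ->
  walk_sign x0 s i j * walk_sign x0 s i j = 1.
Proof.
case=> _ hw hj; rewrite /walk_sign -big_split big_nat big1 // => l /andP[_ hl].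
have /(sg.2.2) [_ [->|->]] : e (nth x0 s l) (nth x0 s l.+1) by apply: hw; lia.
  by rewrite /= mulr1.
by rewrite /= mulrNN mulr1.
Qed.

Lemma walk_sign_nth_default x0 x1 s i j : (j < size s)%N -> walk_sign x0 s i j = walk_sign x1 s i j.
Proof.
move=> hj; rewrite /walk_sign !big_nat; apply: eq_bigr => l /andP[_ hl].
by rewrite !(set_nth_default x1 x0) //; lia.
Qed.

Lemma sign_consistent_nth_default x0 x1 c s :
  sign_consistent x0 c s -> sign_consistent x1 c s.
Proof.
move=> hc i hi; rewrite /switched (set_nth_default x0) // (walk_sign_nth_default x1 x0) //.
exact: hc.
Qed.

Lemma sign_consistent_neq0 x0 c s i : sign_consistent x0 c s -> (i < size s)%N ->
  f (nth x0 s i) != 0 -> c != 0.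
Proof. by move=> hc hi fi; apply/eqP => c0; move: (hc i hi fi); rewrite c0 mul0r ltxx. Qed.

Lemma switched_mul x0 s i j : is_walk e s -> (i <= j)%N -> (j < size s)%N ->
  switched x0 s i * switched x0 s j =
  f (nth x0 s i) * walk_sign x0 s i j * f (nth x0 s j).
Proof.
move=> hw hij hj; rewrite /switched (@walk_sign_cat _ _ 0 i j) ?hij //.
have := walk_sign_sqr x0 0 hw (leq_ltn_trans hij hj).
by set a := walk_sign _ _ 0 i => ha; rewrite -[RHS]mulr1 -ha; ring.
Qed.

Lemma W_walk_switched_lt x0 s i j : is_W_walk s -> (i < j)%N -> (j < size s)%N ->
  f (nth x0 s i) != 0 -> f (nth x0 s j) != 0 ->
  0 < switched x0 s i * switched x0 s j.
Proof.
move=> [hw hW]; move: {2}(j - i)%N (leqnn (j - i)) => d.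
elim: d i j => [|d IH] i j hd hij hj fi fj; first lia.
(* A nonzero vertex strictly between i and j splits the gap; without one,
   the defining condition of a W-walk applies to i and j directly. *)
have [/hasP[k]|/hasPn between0] :=
  boolP (has (fun k => f (nth x0 s k) != 0) (index_iota i.+1 j)).
  rewrite mem_index_iota => /andP[hik hkj] fk.
  apply: (@mul_gt0_trans _ _ (switched x0 s k)); apply: IH => //; lia.
rewrite switched_mul ?(ltnW hij) //; apply: hW => // l hil hlj.
by apply/eqP/negbNE/between0; rewrite mem_index_iota hil.
Qed.

Lemma W_walk_switched x0 s i j : is_W_walk s -> (i < size s)%N -> (j < size s)%N ->
  f (nth x0 s i) != 0 -> f (nth x0 s j) != 0 ->
  0 < switched x0 s i * switched x0 s j.
Proof.
move=> hW hi hj fi fj; case: (ltngtP i j) => [hij|hji|<-].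
- exact: W_walk_switched_lt.
- by rewrite mulrC; apply: W_walk_switched_lt.
- rewrite switched_mul //; last exact: hW.1.
  by rewrite walk_sign0 mulr1 -expr2 exprn_even_gt0.
Qed.

Lemma W_walk_sign_consistent x0 s : is_W_walk s -> exists c, sign_consistent x0 c s.
Proof.
move=> hW; have [/hasP[k]|/hasPn zero] :=
  boolP (has (fun k => f (nth x0 s k) != 0) (iota 0 (size s))).
  rewrite mem_iota => /andP[_ hk] fk.
  by exists (switched x0 s k) => i hi fi; apply: W_walk_switched.
exists 1 => i hi; rewrite (negbTE (zero i _)) // mem_iota; lia.
Qed.

Lemma sign_consistent_W_walk x0 c s : is_walk e s -> sign_consistent x0 c s -> is_W_walk s.
Proof.
move=> hw hc; split=> // x1 i j hij hj fi fj _.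
have {}hc := sign_consistent_nth_default (x1 := x1) hc.
rewrite -switched_mul ?(ltnW hij) //; apply: (@mul_gt0_trans _ _ c).
  by rewrite mulrC; apply: hc => //; apply: ltn_trans hj.
exact: hc.
Qed.

Lemma walk_rev s : is_walk e s -> is_walk e (rev s).
Proof.
case=> hs hw; split=> [|x0 i]; rewrite size_rev // => hi.
rewrite !nth_rev; try lia.
have -> : (size s - i.+1 = (size s - i.+2).+1)%N by lia.
by rewrite sg.1; apply: hw; lia.
Qed.

Lemma walk_sign_rev x0 s i : is_walk e s -> (i < size s)%N ->
  walk_sign x0 (rev s) 0 i = walk_sign x0 s (size s - i.+1) (size s).-1.
Proof.
move=> hw; elim: i => [|i IH] hi; first by rewrite subn1 !walk_sign0.
rewrite /walk_sign big_nat_recr //= -/(walk_sign _ _ _ _) IH; last lia.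
rewrite /walk_sign (@big_ltn _ _ _ (size s - i.+2)%N); last lia.
have -> : ((size s - i.+2).+1 = size s - i.+1)%N by lia.
rewrite !nth_rev; try lia.
rewrite -/(walk_sign _ _ _ _) mulrC; congr (_ * _).
have -> : (size s - i.+1 = (size s - i.+2).+1)%N by lia.
by have /(sg.2.2) [<-] : e (nth x0 s (size s - i.+2)) (nth x0 s (size s - i.+2).+1)
  by apply: hw.2; lia.
Qed.

Lemma switched_rev x0 s i : is_walk e s -> (i < size s)%N ->
  switched x0 (rev s) i =
  switched x0 s (size s - i.+1) * walk_sign x0 s 0 (size s).-1.
Proof.
move=> hw hi; rewrite /switched walk_sign_rev // nth_rev //.
rewrite (@walk_sign_cat _ _ 0 (size s - i.+1) (size s).-1); last lia.
have := walk_sign_sqr x0 0 hw (_ : size s - i.+1 < size s)%N.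
by set a := walk_sign _ _ 0 _ => ha; rewrite -[LHS]mulr1 -ha //; [ring | lia].
Qed.

Lemma sign_consistent_rev x0 c s : is_walk e s -> sign_consistent x0 c s ->
  sign_consistent x0 (c * walk_sign x0 s 0 (size s).-1) (rev s).
Proof.
move=> hw hc i; rewrite size_rev => hi; rewrite nth_rev // => fi.
have := hc _ (_ : size s - i.+1 < size s)%N fi.
rewrite switched_rev //; set a := walk_sign _ _ 0 _ => hpos.
have -> : c * a * (switched x0 s (size s - i.+1) * a) =
  c * switched x0 s (size s - i.+1) * (a * a) by ring.
by rewrite walk_sign_sqr ?mulr1 //; lia.
Qed.

Lemma walk_sign_cat_rcons x0 p y t i j : (j <= size p)%N ->
  walk_sign x0 (p ++ y :: t) i j = walk_sign x0 (rcons p y) i j.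
Proof.
move=> hj; rewrite /walk_sign !big_nat; apply: eq_bigr => l /andP[_ hl].
by rewrite !nth_cat_rcons //; lia.
Qed.

Lemma walk_sign_cat_shift x0 p s i j :
  walk_sign x0 (p ++ s) (size p + i) (size p + j) = walk_sign x0 s i j.
Proof.
rewrite /walk_sign addnC big_addn [(size p + j)%N]addnC addnK.
by apply: eq_bigr => l _; rewrite addnC -addnS !nth_cat_shift.
Qed.

Lemma switched_cat_rcons x0 p y t i : (i <= size p)%N ->
  switched x0 (p ++ y :: t) i = switched x0 (rcons p y) i.
Proof. by move=> hi; rewrite /switched nth_cat_rcons // walk_sign_cat_rcons. Qed.

Lemma switched_cat_shift x0 p y t i :
  switched x0 (p ++ y :: t) (size p + i) =
  walk_sign x0 (rcons p y) 0 (size p) * switched x0 (y :: t) i.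
Proof.
rewrite /switched (@walk_sign_cat _ _ 0 (size p)) ?leq_addr // walk_sign_cat_rcons //.
by rewrite -{3}[size p]addn0 walk_sign_cat_shift nth_cat_shift; ring.
Qed.

Lemma walk_cat p y t : is_walk e (rcons p y) -> is_walk e (y :: t) ->
  is_walk e (p ++ y :: t).
Proof.
case=> _ hw1 [hs2 hw2]; split=> [|x0 i hi]; first by rewrite size_cat /= in hs2 *; lia.
rewrite size_cat /= in hi; case: (ltnP i (size p)) => hip.
  by rewrite !nth_cat_rcons ?(ltnW hip) //; apply: (hw1 x0 i); rewrite size_rcons.
have -> : i = (size p + (i - size p))%N by lia.
by rewrite -addnS !nth_cat_shift; apply: hw2 => /=; lia.
Qed.

Lemma sign_consistent_cat x0 p y t c1 c2 :
  sign_consistent x0 c1 (rcons p y) -> sign_consistent x0 c2 (y :: t) ->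
  0 < c1 * walk_sign x0 (rcons p y) 0 (size p) * c2 ->
  sign_consistent x0 c1 (p ++ y :: t).
Proof.
move=> hc1 hc2 hjoin i; rewrite size_cat /= => hi.
case: (leqP i (size p)) => hip.
  rewrite switched_cat_rcons // nth_cat_rcons // => fi.
  by apply: hc1; rewrite // size_rcons.
have -> : i = (size p + (i - size p))%N by lia.
rewrite switched_cat_shift nth_cat_shift mulrA => fi.
by apply: mul_gt0_trans hjoin (hc2 _ _ fi) => /=; lia.
Qed.

Lemma W_walk_from_toE x y :
  W_walk_from_to x y <-> exists s, is_W_walk (x :: s) /\ last x s = y.
Proof.
split=> [[[|a s] [hW [/= ha [hl _]]]] // | [s [hW hl]]]; last by exists (x :: s).
by subst a; exists s.
Qed.

Lemma W_walk_from_to_sym x y : W_walk_from_to x y -> W_walk_from_to y x.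
Proof.
move=> /W_walk_from_toE [s [hW <-]]; apply/W_walk_from_toE.
case/lastP: s hW => [[[]] // | q z hW]; exists (rcons (rev q) x).
rewrite !last_rcons; split=> //.
have [c hc] := W_walk_sign_consistent x hW.
rewrite -rev_cons -rev_rcons.
exact: sign_consistent_W_walk (walk_rev hW.1) (sign_consistent_rev hW.1 hc).
Qed.

Lemma W_walk_from_to_trans x y z : f y != 0 ->
  W_walk_from_to x y -> W_walk_from_to y z -> W_walk_from_to x z.
Proof.
move=> fy /W_walk_from_toE [s [hW1 ys]] /W_walk_from_toE [t [hW2 <-]]; subst y.
apply/W_walk_from_toE; case/lastP: s hW1 hW2 fy => [[[]] // | q w hW1].
rewrite last_rcons -rcons_cons in hW1 * => hW2 fw; exists (q ++ w :: t).
split; last by rewrite last_cat.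
have [c1 hc1] := W_walk_sign_consistent x hW1.
have [c2 hc2] := W_walk_sign_consistent x hW2.
have hjoin : 0 < c1 * walk_sign x (rcons (x :: q) w) 0 (size (x :: q)) * c2.
  have h1 : 0 < c1 * (f w * walk_sign x (rcons (x :: q) w) 0 (size (x :: q))).
    by have := hc1 (size (x :: q)); rewrite /switched size_rcons nth_rcons ltnn eqxx; apply.
  have h2 : 0 < c2 * f w by have := hc2 0%N; rewrite /switched walk_sign0 mulr1; apply.
  nra.
rewrite -[x :: _]cat_cons; apply: sign_consistent_W_walk (walk_cat hW1.1 hW2.1) _.
exact: sign_consistent_cat hc1 hc2 hjoin.
Qed.

Lemma W_walk_from_to_fork v t1 t2 c1 c2 :
  is_W_walk (v :: t1) -> is_W_walk (v :: t2) ->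
  sign_consistent v c1 (v :: t1) -> sign_consistent v c2 (v :: t2) -> 0 < c1 * c2 ->
  W_walk_from_to (last v t1) (last v t2).
Proof.
case/lastP: t1 => [[[]] // | q w hW1 hW2 hc1 hc2 hc12].
rewrite last_rcons; apply/W_walk_from_toE; exists (rev q ++ v :: t2).
split; last by rewrite last_cat.
set s1 := v :: rcons q w.
have hw1 := hW1.1; have hrev := sign_consistent_rev hw1 hc1.
set c1' := c1 * _ in hrev.
(* Reversal multiplies the sign by walk_sign of the first walk, and gluing at v
   multiplies by it once more, so the junction sign is c1 * c2. *)
have hjoin : 0 < c1' * walk_sign v (rev s1) 0 (size s1).-1 * c2.
  rewrite walk_sign_rev //= subnn -(mulrA c1) walk_sign_sqr ?mulr1 //.
have hwr := walk_rev hw1.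
rewrite (_ : (size s1).-1 = size (w :: rev q)) in hjoin; last by rewrite /= size_rcons size_rev.
rewrite /s1 rev_cons rev_rcons in hjoin hrev hwr.
rewrite -cat_cons; apply: sign_consistent_W_walk (walk_cat hwr hW2.1) _.
exact: sign_consistent_cat hrev hc2 hjoin.
Qed.

End Walks.

Section NodalDomains.
Variables (T : finType) (R : realType) (e : rel T) (sigma : T -> T -> R) (f : T -> R).
Hypothesis sg : signed_graph e sigma.

Local Notation is_W_walk := (is_W_walk e sigma f).
Local Notation W_walk_from_to := (W_walk_from_to e sigma f).
Local Notation W_rel := (W_rel e sigma f).
Local Notation W_class0 := (W_class0 e sigma f).
Local Notation sign_consistent := (sign_consistent sigma f).

Definition nodal_domain_of (D : {set T}) (x : T) : Prop :=
  f x != 0 /\ forall z, z \in D <-> W_class0 x z.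

Definition reaches_with_sign (D : {set T}) (v : T) (c : R) : Prop :=
  exists t, [/\ is_W_walk (v :: t), sign_consistent v c (v :: t) &
                nodal_domain_of D (last v t)].

Lemma W_rel_sym x y : W_rel x y -> W_rel y x.
Proof. by case=> [->|[h|h]]; [left | right; right | right; left]. Qed.

Lemma W_rel_trans x y z : f y != 0 -> W_rel x y -> W_rel y z -> W_rel x z.
Proof.
move=> fy [->//|hxy] [<-|hyz]; first by right.
have hxy' : W_walk_from_to x y by case: hxy => // /(W_walk_from_to_sym sg).
have hyz' : W_walk_from_to y z by case: hyz => // /(W_walk_from_to_sym sg).
right; left; exact: (W_walk_from_to_trans sg fy hxy' hyz').
Qed.

Lemma W_class0_W_rel x y z : f x != 0 -> f y != 0 -> W_rel x y ->
  W_class0 x z -> W_class0 y z.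
Proof.
move=> fx fy hxy hz; have hyx := W_rel_sym hxy.
case: hz => [[fz hxz] | [w [[fw hxw] hzw]]].
  by left; split=> //; apply: W_rel_trans fx hyx hxz.
by right; exists w; split=> //; split=> //; apply: W_rel_trans fx hyx hxw.
Qed.

Lemma nodal_domain_of_W_rel D x y : nodal_domain_of D x -> f y != 0 -> W_rel x y ->
  nodal_domain_of D y.
Proof.
move=> [fx hD] fy hxy; split=> // z; rewrite hD.
by split; apply: W_class0_W_rel => //; apply: W_rel_sym.
Qed.

Lemma nodal_domain_of_inj D1 D2 x : nodal_domain_of D1 x -> nodal_domain_of D2 x ->
  D1 = D2.
Proof.
move=> [_ h1] [_ h2]; apply/setP => z.
by apply/idP/idP => hz; [apply/h2/h1 | apply/h1/h2].
Qed.

Lemma mem_nodal_domain_of D x v : nodal_domain_of D x -> v \in D -> f v != 0 ->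
  nodal_domain_of D v.
Proof.
move=> hD /hD.2 [[_ hxv] | [w [[fw hxw] hvw]]] fv; apply: nodal_domain_of_W_rel hD fv _ => //.
by apply: W_rel_trans fw hxw _; right; right.
Qed.

Lemma mem_nodal_domain_reaches D x v : nodal_domain_of D x -> v \in D -> f v = 0 ->
  exists2 c, c != 0 & reaches_with_sign D v c.
Proof.
move=> hD /hD.2 [[/eqP //] | [w [[fw hxw] /W_walk_from_toE [t [hW hwt]]]]] _.
have [c hc] := W_walk_sign_consistent sg v hW.
exists c; last by exists t; split; rewrite // hwt; apply: nodal_domain_of_W_rel hD fw hxw.
by apply: (sign_consistent_neq0 hc (ltnSn (size t))); rewrite (nth_last v (v :: t)) /= hwt.
Qed.

Lemma reaches_with_sign_eq D1 D2 v c1 c2 : reaches_with_sign D1 v c1 ->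
  reaches_with_sign D2 v c2 -> 0 < c1 * c2 -> D1 = D2.
Proof.
move=> [t1 [hW1 hc1 hD1]] [t2 [hW2 hc2 hD2]] hc12.
apply: nodal_domain_of_inj (nodal_domain_of_W_rel hD1 hD2.1 _) hD2.
by right; left; apply: (W_walk_from_to_fork sg hW1 hW2 hc1 hc2 hc12).
Qed.

End NodalDomains.

Theorem proposition3p8 (T : finType) (R : realType) (e : rel T)
  (sigma : T -> T -> R) (f : T -> R) :
  signed_graph e sigma ->
  (exists x, f x != 0) ->
  forall D1 D2 D3 : {set T},
    weak_nodal_domain e sigma f D1 ->
    weak_nodal_domain e sigma f D2 ->
    weak_nodal_domain e sigma f D3 ->
    D1 != D2 -> D1 != D3 -> D2 != D3 ->
    D1 :&: D2 :&: D3 = set0.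
Proof.
move=> sg _ D1 D2 D3 [x1 hD1] [x2 hD2] [x3 hD3] /eqP n12 /eqP n13 /eqP n23.
apply/setP => v; rewrite !inE; apply/negP => /andP[/andP[v1 v2] v3].
have [fv | fv] := eqVneq (f v) 0; last first.
  apply: n12; apply: nodal_domain_of_inj (mem_nodal_domain_of sg hD1 v1 fv) _.
  exact: (mem_nodal_domain_of sg hD2 v2 fv).
have [c1 nz1 r1] := mem_nodal_domain_reaches sg hD1 v1 fv.
have [c2 nz2 r2] := mem_nodal_domain_reaches sg hD2 v2 fv.
have [c3 nz3 r3] := mem_nodal_domain_reaches sg hD3 v3 fv.
case: (sign_pigeonhole nz1 nz2 nz3) => same_sign.
- by apply: n12; apply: (reaches_with_sign_eq sg r1 r2).
- by apply: n13; apply: (reaches_with_sign_eq sg r1 r3).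
- by apply: n23; apply: (reaches_with_sign_eq sg r2 r3).
Qed.
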